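(* Let $\Gamma$ be a second countable locally compact abelian group, $n\ge2$, $\omega\in\Gamma^n$, and $X$ a non-empty $\omega$-invariant subset of $\Gamma$. The following are equivalent: (i) $X$ is prime; (ii) for any $\gamma_0,\gamma_1\in X$ and any neighborhoods $U_0,U_1$ of $\gamma_0,\gamma_1$, there exist $\gamma\in X$ and words $\mu,\nu$ with $\gamma+\omega_\mu\in U_0$ and $\gamma+\omega_\nu\in U_1$; (iii) for any $\gamma_0,\gamma_1\in X$ there exist sequences of words $\mu_1,\mu_2,\ldots$ and $\nu_1,\nu_2,\ldots$ with $\gamma_0-\omega_{\mu_k}\in X$, $\gamma_1-\omega_{\nu_k}\in X$ for all $k$ and $\lim_{k\to\infty}\big((\gamma_0-\omega_{\mu_k})-(\gamma_1-\omega_{\nu_k})\big)=0$; (iv) $X=\gamma+\Omega_{\mathbb{I}}$ for some $\gamma\in\Gamma$ and some non-empty $\mathbb{I}\subset\{1,\ldots,n\}$.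
   Context: $\Gamma$ is written additively. Words are finite sequences $\mu=(i_1,\ldots,i_k)$ in $\{1,\ldots,n\}$ (including the empty word), and $\omega_\mu=\sum_j\omega_{i_j}$ ($\omega_\emptyset=0$). A closed $X\subset\Gamma$ is $\omega$-invariant if $X+\omega_i\subset X$ for all $i$ and every $\gamma\in X$ has some $i$ with $\gamma-\omega_i\in X$; it is prime if for all $\omega$-invariant $X_1,X_2$ with $X\subset X_1\cup X_2$ one has $X\subset X_1$ or $X\subset X_2$. For non-empty $\mathbb{I}$, $\Omega_{\mathbb{I}}$ is the closed subsemigroup generated by $\omega_1,\ldots,\omega_n$ and $-\omega_i$ ($i\in\mathbb{I}$). *)

From HB Require Import structures.
From mathcomp Require Import all_boot all_order all_algebra.
From mathcomp Require Import all_classical all_reals all_analysis.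
Set Implicit Arguments.
Unset Strict Implicit.
Unset Printing Implicit Defensive.
Import Order.TTheory GRing.Theory Num.Theory.
Local Open Scope classical_set_scope.
Local Open Scope ring_scope.

(* Gamma is a topologicalZmodType (topological abelian group, written additively).
   Indices 1..n of the paper are represented by 'I_n (0..n-1). *)

Definition word_sum (G : zmodType) (n : nat) (w : 'I_n -> G) (mu : seq 'I_n) : G :=
  \sum_(i <- mu) w i.

Definition omega_invariant (G : topologicalZmodType) (n : nat) (w : 'I_n -> G)
    (X : set G) : Prop :=
  [/\ closed X,
      (forall i x, X x -> X (x + w i)) &
      (forall x, X x -> exists i, X (x - w i))].

Definition prime_set (G : topologicalZmodType) (n : nat) (w : 'I_n -> G)
    (X : set G) : Prop :=
  forall X1 X2 : set G, omega_invariant w X1 -> omega_invariant w X2 ->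
    X `<=` X1 `|` X2 -> X `<=` X1 \/ X `<=` X2.

Definition Omega (G : topologicalZmodType) (n : nat) (w : 'I_n -> G)
    (I : {set 'I_n}) : set G :=
  \bigcap_(S in [set S : set G | [/\ closed S,
        (forall x y, S x -> S y -> S (x + y)),
        (forall i, S (w i)) &
        (forall i, i \in I -> S (- w i))]]) S.

From HB Require Import structures.
From mathcomp Require Import all_boot all_order all_algebra.
From mathcomp Require Import all_classical all_reals all_analysis.
Import Order.TTheory GRing.Theory Num.Theory.
Local Open Scope classical_set_scope.
Local Open Scope ring_scope.
Set Implicit Arguments.
Unset Strict Implicit.
Unset Printing Implicit Defensive.

(* For a closed Y with Y + w_i ⊆ Y, the points x having ancestors x - w_mu in Y
   for words mu of every length form an omega-invariant subset of Y (a
   pigeonhole over the finitely many letters chooses the last letter), and it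
   contains every omega-invariant subset of Y.  Hence a prime X covered by
   finitely many such sets lies in one of them.
   (i) => (ii): otherwise X is covered by the points of X whose forward orbits
   avoid the interior of U0, resp. of U1.
   (i) => (iv): let I be the set of letters i with X - w_i ⊆ X.  Covering X by
   the sets {x in X | x - w_i in X} shows that I is non-empty and that some g in
   X has g - w_j outside X for every j outside I.  Applying (ii) near any z in X
   and near g, the word leading close to g uses only letters of I, so z - g lies
   in Omega_I; conversely X + Omega_I ⊆ X.
   (iv) => (iii): Omega_I is the closure of {w_mu - w_nu | nu a word over I}.
   Approximate by sequences (second countability) and pass, by Dickson's lemma,
   to a subsequence along which the letter counts of the words mu increase; in
   the limit x - w_mu stays in Omega_I.
   (iii) => (ii) => (i) are direct. *)

Lemma pigeonhole_antitone (I : finType) (P : pred I) (B : I -> nat -> Prop) :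
  (forall i k l, P i -> (k <= l)%N -> B i l -> B i k) ->
  (forall k, exists2 i, P i & B i k) -> exists2 i, P i & forall k, B i k.
Proof.
move=> antiB exB; apply: contrapT => noB.
have /choice [f fP] : forall i, exists k, P i -> ~ B i k.
  move=> i; apply: contrapT => /forallNP allB; apply: noB; exists i.
    by have /not_implyP [] := allB 0%N.
  by move=> k; have /not_implyP [_ /contrapT] := allB k.
have [i Pi Bi] := exB (\max_j f j).
by apply: (fP i Pi); apply: (antiB i _ _ Pi _ Bi); exact: leq_bigmax.
Qed.

Lemma homo_ltn_ge_id (phi : nat -> nat) :
  {homo phi : k l / (k < l)%N} -> forall k, (k <= phi k)%N.
Proof. by move=> phiI; elim=> // k IH; exact: leq_ltn_trans IH (phiI _ _ (ltnSn k)). Qed.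

Lemma nondecreasing_subseq (a : nat -> nat) :
  exists2 phi : nat -> nat, {homo phi : k l / (k < l)%N} &
    {homo a \o phi : k l / (k <= l)%N}.
Proof.
have /choice [m mP] : forall k, exists j,
    (k <= j)%N /\ forall j', (k <= j')%N -> (a j <= a j')%N.
  move=> k; have amin : exists v, `[< exists2 j, (k <= j)%N & a j = v >].
    by exists (a k); apply/asboolP; exists k.
  case: (ex_minnP amin) => _ /asboolP [j kj <-] jmin.
  by exists j; split => // j' kj'; apply: jmin; apply/asboolP; exists j'.
pose start k := iter k (fun j => (m j).+1) 0%N.
exists (m \o start).
  by apply: homo_ltn => [|k]; [exact: ltn_trans | exact: (mP _).1].
apply: homo_leq => [||k /=]; [exact: leqnn | exact: leq_trans |].
by apply: (mP _).2; exact: leq_trans (mP _).1 (leq_trans (leqnSn _) (mP _).1).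
Qed.

Lemma dickson (T : finType) (c : nat -> T -> nat) :
  exists2 phi : nat -> nat, {homo phi : k l / (k < l)%N} &
    forall t, {homo (fun k => c (phi k) t) : k l / (k <= l)%N}.
Proof.
suff [phi phiI cphi] : exists2 phi : nat -> nat, {homo phi : k l / (k < l)%N} &
    forall t, t \in enum T -> {homo (fun k => c (phi k) t) : k l / (k <= l)%N}.
  by exists phi => // t; apply: cphi; rewrite mem_enum.
elim: (enum T) => [|t s [phi phiI cphi]]; first by exists id.
have [psi psiI cpsi] := nondecreasing_subseq (fun k => c (phi k) t).
exists (phi \o psi) => [k l kl | u]; first exact/phiI/psiI.
rewrite inE => /orP [/eqP -> | us] k l kl; first exact: cpsi.
by apply: cphi => //; exact: ltnW_homo psiI _ _ kl.
Qed.

Lemma cvg_subseq (T : topologicalType) (u : nat -> T) (x : T) (phi : nat -> nat) :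
  {homo phi : k l / (k < l)%N} -> u @ \oo --> x -> (u \o phi) @ \oo --> x.
Proof.
move=> phiI ux B /ux [N _ uB]; exists N => // k /= Nk.
exact/uB/(leq_trans Nk (homo_ltn_ge_id phiI k)).
Qed.

Section SecondCountable.
Variables (T : topologicalType) (T2c : @second_countable T).

Lemma nbhs_nested_base (x : T) : exists W : nat -> set T,
  [/\ forall k, nbhs x (W k), forall k l, (k <= l)%N -> W l `<=` W k &
      forall U, nbhs x U -> exists k, W k `<=` U].
Proof.
have [B cB [oB Bx]] := T2c; have [f finj] := countable_injP _ cB.
exists (fun k => [set y | forall b, B b -> b x -> (f b <= k)%N -> b y]); split.
- (* By injectivity of f, each index i <= k names at most one basic set. *)
  move=> k; have : \forall y \near x, forall i : 'I_k.+1,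
      forall b, B b -> b x -> f b = i -> b y.
    apply: filter_forall => i.
    have [[b [Bb bx fb]]|nob] := pselect (exists b, [/\ B b, b x & f b = i]).
      apply: filterS (open_nbhs_nbhs (conj (oB _ Bb) bx)) => y yb b' Bb' b'x fb'.
      by have -> : b' = b by apply: finj; rewrite ?inE // fb fb'.
    by apply: nearW => y b Bb bx fb; case: nob; exists b.
  by apply: filterS => y yW b Bb bx fbk; exact: (yW (Ordinal (fbk : (f b < k.+1)%N))).
- by move=> k l kl y yW b Bb bx fbk; apply: yW => //; exact: leq_trans kl.
- by move=> U /(Bx x) [V [BV Vx] VU]; exists (f V) => y yW; exact/VU/(yW V BV Vx).
Qed.

Lemma closure_cvg_seq (A : set T) (x : T) : closure A x ->
  exists2 u : nat -> T, (forall k, A (u k)) & u @ \oo --> x.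
Proof.
move=> Ax; have [W [Wx Wdec Wbase]] := nbhs_nested_base x.
have /choice [u uP] : forall k, exists y, A y /\ W k y by move=> k; exact: Ax _ (Wx k).
exists u => [k|U /Wbase [k WU]]; first by case: (uP k).
by exists k => // l /= kl; apply/WU/(Wdec _ _ kl); case: (uP l).
Qed.

End SecondCountable.

Section TopologicalZmodule.
Variable G : topologicalZmodType.

Lemma continuous_addr (a : G) : continuous (fun x : G => x + a).
Proof.
move=> x; apply: (@continuous_comp _ _ _ (fun x => (x, a)) (fun z : G * G => z.1 + z.2)).
  by apply: cvg_pair; [exact: cvg_id | exact: cvg_cst].
exact: add_continuous.
Qed.

Lemma nbhs_addr (x a : G) (B : set G) : nbhs (x + a) B -> nbhs x [set y | B (y + a)].
Proof. exact: continuous_addr. Qed.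

Lemma closed_addr (A : set G) (a : G) : closed A -> closed [set x | A (x + a)].
Proof. by move=> cA; apply: preimage_closed => // x _; exact: continuous_addr. Qed.

Lemma nbhs_subr (x y : G) (B : set G) : nbhs (x - y) B ->
  exists2 U, nbhs x U & exists2 V, nbhs y V & forall a b, U a -> V b -> B (a - b).
Proof.
move=> /(@sub_continuous G (x, y)) [[U V] /= [nU nV] UVB].
by exists U => //; exists V => // a b Ua Vb; exact: (UVB (a, b)).
Qed.

Lemma cvgB_zmod (S : Type) (F : set_system S) {FF : Filter F} (u v : S -> G) (a b : G) :
  u @ F --> a -> v @ F --> b -> (fun s => u s - v s) @ F --> a - b.
Proof.
move=> ua vb B /(@sub_continuous G (a, b)) [[U V] /= [/ua uU /vb vV] UVB].
apply: (@filterS _ F _ (u @^-1` U `&` v @^-1` V)); last exact: filterI.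
by move=> s [Uu Vv]; exact: (UVB (u s, v s)).
Qed.

Lemma closure_addr_closed (A : set G) : (forall x y, A x -> A y -> A (x + y)) ->
  forall x y, closure A x -> closure A y -> closure A (x + y).
Proof.
move=> addA x y Ax Ay B /(@add_continuous G (x, y)) [[U V] /= [nU nV] UVB].
have [a [Aa Ua]] := Ax _ nU; have [b [Ab Vb]] := Ay _ nV.
by exists (a + b); split; [exact: addA | exact: (UVB (a, b))].
Qed.

End TopologicalZmodule.

Section WordSum.
Variables (V : zmodType) (n : nat) (w : 'I_n -> V).
Local Notation ws := (word_sum w).

Lemma word_sum_nil : ws [::] = 0. Proof. by rewrite /word_sum big_nil. Qed.

Lemma word_sum_cons i mu : ws (i :: mu) = w i + ws mu.
Proof. by rewrite /word_sum big_cons. Qed.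

Lemma word_sum_cat mu nu : ws (mu ++ nu) = ws mu + ws nu.
Proof. by rewrite /word_sum big_cat. Qed.

Lemma word_sum_rem j mu : j \in mu -> ws mu = w j + ws (rem j mu).
Proof. by move=> jmu; rewrite /word_sum (big_rem j jmu). Qed.

Lemma subr_word_sum_cons x i mu : x - ws (i :: mu) = x - w i - ws mu.
Proof. by rewrite word_sum_cons opprD addrA. Qed.

Lemma word_sum_count_le mu nu : (forall i, count_mem i mu <= count_mem i nu)%N ->
  exists rho, ws nu = ws mu + ws rho.
Proof.
move=> /count_subseqP [s /perm_to_subseq [rho nu_s_rho] mu_s].
by exists rho; rewrite /word_sum (perm_big _ nu_s_rho) big_cat /= (perm_big _ mu_s).
Qed.

End WordSum.

Section OmegaInvariant.
Variables (G : topologicalZmodType) (n : nat) (w : 'I_n -> G).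
Local Notation ws := (word_sum w).
Implicit Types (X Y : set G).

Definition forward_closed Y := forall i x, Y x -> Y (x + w i).

Lemma forward_closed_word Y : forward_closed Y -> forall mu x, Y x -> Y (x + ws mu).
Proof.
move=> fY; elim=> [|i mu IH] x Yx; first by rewrite word_sum_nil addr0.
by rewrite word_sum_cons addrA; apply/IH/fY.
Qed.

Lemma omega_invariant_set0 : omega_invariant w set0.
Proof. by split => //; exact: closed0. Qed.

Lemma omega_invariant_setU X Y :
  omega_invariant w X -> omega_invariant w Y -> omega_invariant w (X `|` Y).
Proof.
move=> [cX fX bX] [cY fY bY]; split; first exact: closedU.
  by move=> i x [Xx|Yx]; [left; exact: fX | right; exact: fY].
by move=> x [/bX [i Xi]|/bY [i Yi]]; exists i; [left|right].
Qed.

Lemma omega_invariant_bigsetU (I : eqType) (s : seq I) (F : I -> set G) :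
  (forall i, i \in s -> omega_invariant w (F i)) ->
  omega_invariant w (\big[setU/set0]_(i <- s) F i).
Proof.
move=> invF; rewrite big_seq; elim/big_ind: _ => [|A B|i];
  [exact: omega_invariant_set0 | exact: omega_invariant_setU | exact: invF].
Qed.

Lemma prime_bigcup (I : finType) (P : pred I) (F : I -> set G) X :
  prime_set w X -> X !=set0 -> (forall i, P i -> omega_invariant w (F i)) ->
  (forall x, X x -> exists2 i, P i & F i x) -> exists2 i, P i & X `<=` F i.
Proof.
move=> pX [x0 Xx0] invF XF.
have /(_ (enum P)) [||i] : forall s, (forall i, i \in s -> omega_invariant w (F i)) ->
    X `<=` \big[setU/set0]_(i <- s) F i -> exists2 i, i \in s & X `<=` F i.
  elim=> [|i s IH] invs; first by rewrite big_nil => /(_ _ Xx0).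
  have invs' j : j \in s -> omega_invariant w (F j).
    by move=> js; apply: invs; rewrite inE js orbT.
  rewrite big_cons => /(pX _ _ (invs i (mem_head i s)) (omega_invariant_bigsetU invs')).
  case=> [XFi|/(IH invs') [j js XFj]]; first by exists i; rewrite ?mem_head.
  by exists j; rewrite ?inE ?js ?orbT.
- by move=> i; rewrite mem_enum; exact: invF.
- by move=> x /XF [i Pi Fix]; rewrite -bigcup_seq; exists i; rewrite //= mem_enum.
- by rewrite mem_enum; exists i.
Qed.

Definition reach Y k := [set x | exists2 mu, size mu = k & Y (x - ws mu)].

Definition omega_core Y := \bigcap_k reach Y k.

Lemma closed_reach Y k : closed Y -> closed (reach Y k).
Proof.
move=> cY; have -> : reach Y k = \bigcup_(t in [set: k.-tuple 'I_n]) [set x | Y (x + - ws t)].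
  apply/seteqP; split=> x /=.
  - by move=> [mu /eqP smu Ymu]; exists (Tuple smu).
  - by move=> [t _ Yt]; exists t; rewrite ?size_tuple.
by apply: closed_bigcup => [|t _]; [exact: finite_finset | exact: closed_addr].
Qed.

Lemma reach_antitone Y k l : forward_closed Y -> (k <= l)%N -> reach Y l `<=` reach Y k.
Proof.
move=> fY kl x [mu smu Ymu]; exists (drop (l - k) mu); first by rewrite size_drop smu subKn.
have := forward_closed_word fY (take (l - k) mu) Ymu.
by rewrite -[in ws mu](cat_take_drop (l - k) mu) word_sum_cat opprD addrA addrAC subrK.
Qed.

Lemma omega_core_sub Y : omega_core Y `<=` Y.
Proof. by move=> x /(_ 0%N Logic.I) [mu /size0nil ->]; rewrite word_sum_nil subr0. Qed.

Lemma omega_invariant_core Y : closed Y -> forward_closed Y -> omega_invariant w (omega_core Y).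
Proof.
move=> cY fY; split.
- by apply: closed_bigI => k _; exact: closed_reach.
- move=> i x Yx k _; have [mu smu Ymu] := Yx k Logic.I.
  by exists mu => //; rewrite addrAC; exact: fY.
- move=> x Yx.
  have [||i _ Yxi] := @pigeonhole_antitone _ predT (fun i k => reach Y k (x - w i)).
  + by move=> i k l _ kl; exact: reach_antitone.
  + move=> k; have [mu smu Ymu] := Yx k.+1 Logic.I.
    case: mu smu Ymu => // i mu [smu] Ymu.
    by exists i => //; exists mu; rewrite // -subr_word_sum_cons.
  + by exists i => k _; exact: Yxi.
Qed.

Section PrimeSet.
Variable X : set G.
Hypothesis invX : omega_invariant w X.

Lemma sub_reach k : X `<=` reach X k.
Proof.
have [_ _ bX] := invX.
elim: k => [|k IH] x Xx; first by exists [::]; rewrite ?word_sum_nil ?subr0.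
have [mu smu Xmu] := IH x Xx; have [i Xi] := bX _ Xmu.
by exists (i :: mu); rewrite /= ?smu // subr_word_sum_cons addrAC.
Qed.

Lemma prime_cover (I : finType) (P : pred I) (Y : I -> set G) :
  prime_set w X -> X !=set0 ->
  (forall i, P i -> closed (Y i) /\ forward_closed (Y i)) ->
  (forall x, X x -> exists2 i, P i & Y i x) -> exists2 i, P i & X `<=` Y i.
Proof.
move=> pX X0 Yreg XY.
have [||i Pi Xcore] := prime_bigcup (P := P) (F := fun i => omega_core (Y i)) pX X0.
- by move=> i /Yreg [cY fY]; exact: omega_invariant_core.
- move=> x Xx; have [||i Pi reachi] := @pigeonhole_antitone _ P (fun i k => reach (Y i) k x).
  + by move=> i k l Pi kl; apply: reach_antitone; case: (Yreg i Pi).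
  + move=> k; have [mu smu Xmu] := sub_reach k Xx; have [i Pi Yi] := XY _ Xmu.
    by exists i => //; exists mu.
  + by exists i => // k _; exact: reachi.
- by exists i => // x /Xcore /omega_core_sub.
Qed.

Definition transitive_set := forall g0 g1 (U0 U1 : set G), X g0 -> X g1 ->
  nbhs g0 U0 -> nbhs g1 U1 ->
  exists g mu nu, [/\ X g, U0 (g + ws mu) & U1 (g + ws nu)].

Definition backward_asymptotic := forall g0 g1, X g0 -> X g1 ->
  exists (mu nu : nat -> seq 'I_n),
    [/\ (forall k, X (g0 - ws (mu k))), (forall k, X (g1 - ws (nu k))) &
        (fun k => (g0 - ws (mu k)) - (g1 - ws (nu k))) @ \oo --> (0 : G)].

Definition avoiding (U : set G) := X `&` \bigcap_mu [set x | ~ U° (x + ws mu)].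

Lemma closed_avoiding U : closed (avoiding U).
Proof.
apply: closedI; first by case: invX.
apply: closed_bigI => mu _; apply: (@closed_addr _ (~` U°)).
by rewrite closedC; exact: open_interior.
Qed.

Lemma forward_closed_avoiding U : forward_closed (avoiding U).
Proof.
have [_ fX _] := invX.
move=> i x [Xx xU]; split => [|mu _]; first exact: fX.
by rewrite /= -addrA -word_sum_cons; exact: xU.
Qed.

Lemma prime_transitive : prime_set w X -> transitive_set.
Proof.
move=> pX g0 g1 U0 U1 Xg0 Xg1 nU0 nU1; apply: contrapT => nomeet.
pose U b := if b then U1 else U0.
have [|||b _ XU] := @prime_cover _ predT (fun b => avoiding (U b)) pX.
- by exists g0.
- by move=> b _; split; [exact: closed_avoiding | exact: forward_closed_avoiding].
- move=> x Xx; apply: contrapT => nox; apply: nomeet.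
  have enter b : exists mu, (U b)° (x + ws mu).
    apply: contrapT => /forallNP never; apply: nox; exists b => //; split => // mu _.
    exact: never.
  have [[mu0 in0] [mu1 in1]] := (enter false, enter true).
  by exists x, mu0, mu1; split => //; exact: interior_subset.
- by case: b XU => XU; [have [_ /(_ [::] Logic.I) /=] := XU _ Xg1
    | have [_ /(_ [::] Logic.I) /=] := XU _ Xg0]; rewrite word_sum_nil addr0; apply.
Qed.

End PrimeSet.

Lemma transitive_prime X : transitive_set X -> prime_set w X.
Proof.
move=> trX X1 X2 [cX1 fX1 _] [cX2 fX2 _] XX12; apply: contrapT.
move=> /not_orP [/existsNP [x1 /not_implyP [Xx1 nX1x1]] /existsNP [x2 /not_implyP [Xx2 nX2x2]]].
have nbhsC Y x : closed Y -> ~ Y x -> nbhs x (~` Y).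
  by move=> cY nYx; apply: open_nbhs_nbhs; split => //; rewrite openC.
have [g [mu [nu [Xg X1C X2C]]]] :=
  trX _ _ _ _ Xx1 Xx2 (nbhsC _ _ cX1 nX1x1) (nbhsC _ _ cX2 nX2x2).
by case: (XX12 _ Xg) => [/(forward_closed_word fX1 mu) | /(forward_closed_word fX2 nu)].
Qed.

Lemma asymptotic_transitive X : backward_asymptotic X -> transitive_set X.
Proof.
move=> asX g0 g1 U0 U1 Xg0 Xg1 nU0 nU1.
have [mu [nu [Xmu Xnu to0]]] := asX _ _ Xg0 Xg1.
have /to0 [N _ nearU1] : nbhs (0 : G) [set y | U1 (y + g1)].
  by apply: nbhs_addr; rewrite add0r.
exists (g0 - ws (mu N)), (mu N), (nu N); split => //.
  by rewrite subrK; exact: nbhs_singleton.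
by have := nearU1 N (leqnn N); rewrite /= opprB addrA subrK.
Qed.

End OmegaInvariant.

Section Omega.
Variables (G : topologicalZmodType) (n : nat) (w : 'I_n -> G) (I : {set 'I_n}).
Local Notation ws := (word_sum w).
Local Notation Om := (Omega w I).

Lemma Omega_min (S : set G) : closed S -> (forall x y, S x -> S y -> S (x + y)) ->
  (forall i, S (w i)) -> (forall i, i \in I -> S (- w i)) -> Om `<=` S.
Proof. by move=> cS addS wS NwS x; apply. Qed.

Lemma closed_Omega : closed Om.
Proof. by apply: closed_bigI => S []. Qed.

Lemma Omega_add x y : Om x -> Om y -> Om (x + y).
Proof. by move=> Ox Oy S SP; have [_ addS _ _] := SP; exact: addS (Ox S SP) (Oy S SP). Qed.

Lemma Omega_w i : Om (w i).
Proof. by move=> S [_ _ wS _]. Qed.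

Lemma Omega_Nw i : i \in I -> Om (- w i).
Proof. by move=> iI S [_ _ _ NwS]; exact: NwS. Qed.

Hypothesis I0 : I != finset.set0.

Lemma Omega0 : Om 0.
Proof.
have /set0Pn [i iI] := I0; rewrite -(subrr (w i)).
by apply: Omega_add; [exact: Omega_w | exact: Omega_Nw].
Qed.

Lemma Omega_word mu : Om (ws mu).
Proof.
elim: mu => [|i mu IH]; first by rewrite word_sum_nil; exact: Omega0.
by rewrite word_sum_cons; apply: Omega_add; [exact: Omega_w | exact: IH].
Qed.

Lemma Omega_Nword nu : all (mem I) nu -> Om (- ws nu).
Proof.
elim: nu => [|i nu IH] /=; first by move=> _; rewrite word_sum_nil oppr0; exact: Omega0.
move=> /andP [iI Inu]; rewrite word_sum_cons opprD.
by apply: Omega_add; [exact: Omega_Nw | exact: IH].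
Qed.

Definition word_diffs :=
  [set ws mu - ws nu | mu in [set: seq 'I_n] & nu in [set nu | all (mem I) nu]].

Lemma Omega_closureE : Om = closure word_diffs.
Proof.
apply/seteqP; split.
  apply: Omega_min.
  - exact: closed_closure.
  - apply: closure_addr_closed => _ _ [mu _ [nu Inu <-]] [mu' _ [nu' Inu' <-]].
    exists (mu ++ mu') => //; exists (nu ++ nu'); first by rewrite /= all_cat Inu Inu'.
    by rewrite !word_sum_cat opprD addrACA.
  - move=> i; apply: subset_closure; exists [:: i] => //; exists [::] => //.
    by rewrite word_sum_cons !word_sum_nil addr0 subr0.
  - move=> i iI; apply: subset_closure; exists [::] => //; exists [:: i]; first by rewrite /= iI.
    by rewrite word_sum_cons !word_sum_nil addr0 sub0r.
have diffs_Om : word_diffs `<=` Om.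
  by move=> _ [mu _ [nu Inu <-]]; apply: Omega_add; [exact: Omega_word | exact: Omega_Nword].
by move=> x /(closureS diffs_Om); exact: closed_Omega.
Qed.

Lemma Omega_limit_subr (a b : nat -> seq 'I_n) x :
  (forall k, all (mem I) (b k)) ->
  (forall i, {homo (fun k => count_mem i (a k)) : k l / (k <= l)%N}) ->
  (fun k => ws (a k) - ws (b k)) @ \oo --> x -> forall k, Om (x - ws (a k)).
Proof.
move=> Ib a_incr abx k.
apply: (closed_cvg _ closed_Omega _ _ (cvgB_zmod abx (cvg_cst (ws (a k))))).
exists k => // l /= kl.
(* as the letter counts of a grow, w_(a l) is w_(a k) plus a word sum *)
have [rho ->] := word_sum_count_le w (fun i => a_incr i k l kl).
rewrite Omega_closureE; apply: subset_closure; exists rho => //; exists (b l); first exact: Ib.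
by rewrite addrAC [ws (a k) + _]addrC addrK.
Qed.

End Omega.

Definition Omega_translate (G : topologicalZmodType) (n : nat) (w : 'I_n -> G)
    (X : set G) :=
  exists g (I : {set 'I_n}), I != finset.set0 /\ X = [set g + x | x in Omega w I].

Section PrimeOmega.
Variables (G : topologicalZmodType) (n : nat) (w : 'I_n -> G) (X : set G).
Hypotheses (invX : omega_invariant w X) (X0 : X !=set0) (primeX : prime_set w X).
Local Notation ws := (word_sum w).

Definition reversible : {set 'I_n} := [set i | `[< forall x, X x -> X (x - w i) >]].

Lemma reversibleP i : reflect (forall x, X x -> X (x - w i)) (i \in reversible).
Proof. by rewrite inE; exact: asboolP. Qed.

Lemma prime_uniform_predecessor (P : pred 'I_n) :
  (forall x, X x -> exists2 i, P i & X (x - w i)) -> exists2 i, P i & i \in reversible.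
Proof.
have [cX fX _] := invX.
move=> Ppred; have [||i Pi XY] :=
  prime_cover invX (P := P) (Y := fun i => [set x | X x /\ X (x - w i)]) primeX X0.
- move=> i _; split; first by apply: closedI => //; exact: closed_addr.
  by move=> j x [Xx Xxi]; split; [exact: fX | rewrite addrAC; exact: fX].
- by move=> x Xx; have [i Pi Xi] := Ppred x Xx; exists i.
- by exists i => //; apply/reversibleP => x /XY [].
Qed.

Lemma reversible_neq0 : reversible != finset.set0.
Proof.
have [_ _ bX] := invX.
have [|i _ ri] := @prime_uniform_predecessor predT; last by apply/set0Pn; exists i.
by move=> x /bX [i]; exists i.
Qed.

Definition base_point g := X g /\ forall j, j \notin reversible -> ~ X (g - w j).

Lemma exists_base_point : exists g, base_point g.
Proof.
apply: contrapT => nobase.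
have [|j nrj rj] := @prime_uniform_predecessor (fun j => j \notin reversible).
  move=> x Xx; apply: contrapT => nopred; apply: nobase; exists x; split => // j nrj Xj.
  by apply: nopred; exists j.
by rewrite rj in nrj.
Qed.

Lemma Omega_reversible_addr x s : X x -> Omega w reversible s -> X (x + s).
Proof.
have [cX fX _] := invX.
move=> Xx Os; suff /(_ s Os) : Omega w reversible `<=` [set s | forall x, X x -> X (x + s)].
  exact.
apply: Omega_min.
- have -> : [set s | forall x, X x -> X (x + s)] = \bigcap_(x in X) [set s | X (s + x)].
    by apply/seteqP; split => t Xt y Xy /=; rewrite addrC; exact: Xt.
  by apply: closed_bigI => y _; exact: closed_addr.
- by move=> a b Xa Xb y Xy; rewrite addrA; exact/Xb/Xa.
- by move=> i y Xy; exact: fX.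
- by move=> i /reversibleP.
Qed.

Lemma base_point_Omega z g : X z -> base_point g -> Omega w reversible (z - g).
Proof.
have [cX _ _] := invX.
move=> Xz [Xg gbase]; apply: contrapT => notOm.
have [U nU [V nV UV]] : exists2 U, nbhs z U & exists2 V, nbhs g V &
    forall a b, U a -> V b -> ~ Omega w reversible (a - b).
  apply: (@nbhs_subr _ _ _ (~` Omega w reversible)); apply: open_nbhs_nbhs; split => //.
  by rewrite openC; exact: closed_Omega.
have near_base : \forall y \near g, forall j, j \notin reversible -> ~ X (y - w j).
  apply: filter_forall => j; have [rj|nrj] := boolP (j \in reversible).
    exact: nearW.
  have : nbhs (g - w j) (~` X) by apply: open_nbhs_nbhs; split; [rewrite openC | exact: gbase].
  by move=> /nbhs_addr; apply: filterS => y nXy _.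
have [b [mu [nu [Xb Ub [Vb bbase]]]]] :=
  prime_transitive invX primeX Xz Xg nU (filterI nV near_base).
have nu_rev : all (mem reversible) nu.
  apply/allP => j jnu; apply/negPn/negP => nrj; apply: (bbase j nrj).
  rewrite (word_sum_rem w jnu) addrA addrAC addrK.
  by apply: forward_closed_word => //; case: invX.
apply: (UV _ _ Ub Vb); rewrite opprD addrACA subrr add0r.
by apply: Omega_add; [exact: Omega_word reversible_neq0 _ | exact: Omega_Nword reversible_neq0 _ _].
Qed.

Lemma prime_Omega_translate : Omega_translate w X.
Proof.
have [g [Xg gbase]] := exists_base_point.
exists g, reversible; split; first exact: reversible_neq0.
apply/seteqP; split => [z Xz | _ [s Os <-]]; last exact: Omega_reversible_addr.
by exists (z - g); [exact: base_point_Omega | rewrite addrC subrK].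
Qed.

End PrimeOmega.

Lemma subr_translate_swap (V : zmodType) (g x y a b c d : V) :
  (g + x - (a + d)) - (g + y - (c + b)) = (x - (a - b)) - (y - (c - d)).
Proof.
rewrite -(addrA g x) -(addrA g y) [- (g + _)]opprD addrACA subrr add0r.
by rewrite !opprB !opprD !addrA [LHS](AC 6 (1*5*2*4*3*6)).
Qed.

Section OmegaTranslate.
Variables (G : topologicalZmodType) (n : nat) (w : 'I_n -> G).
Hypothesis G2c : @second_countable G.
Local Notation ws := (word_sum w).

Lemma Omega_word_seq (I : {set 'I_n}) x : I != finset.set0 -> Omega w I x ->
  exists2 ab : nat -> seq 'I_n * seq 'I_n, (forall k, all (mem I) (ab k).2) &
    (fun k => ws (ab k).1 - ws (ab k).2) @ \oo --> x.
Proof.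
move=> I0; rewrite Omega_closureE // => /(closure_cvg_seq G2c) [u u_diffs ux].
have /choice [ab abP] : forall k, exists ab : seq 'I_n * seq 'I_n,
    all (mem I) ab.2 /\ ws ab.1 - ws ab.2 = u k.
  by move=> k; have [mu _ [nu Inu e]] := u_diffs k; exists (mu, nu).
exists ab => [k|]; first by case: (abP k).
by have -> : (fun k => ws (ab k).1 - ws (ab k).2) = u by apply/funext => k; case: (abP k).
Qed.

Lemma Omega_translate_asymptotic (X : set G) :
  Omega_translate w X -> backward_asymptotic w X.
Proof.
move=> [g [I [I0 ->]]] _ _ [x0 Ox0 <-] [x1 Ox1 <-].
have [ab Iab abx0] := Omega_word_seq I0 Ox0.
have [cd Icd cdx1] := Omega_word_seq I0 Ox1.
have [phi phiI cphi] := dickson (fun k (t : 'I_n + 'I_n) =>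
  match t with inl i => count_mem i (ab k).1 | inr i => count_mem i (cd k).1 end).
have abx0' := cvg_subseq phiI abx0; have cdx1' := cvg_subseq phiI cdx1.
have Oa := Omega_limit_subr I0 (fun k => Iab (phi k)) (fun i => cphi (inl i)) abx0'.
have Oc := Omega_limit_subr I0 (fun k => Icd (phi k)) (fun i => cphi (inr i)) cdx1'.
(* each word also carries the I-part of the other approximation, so that the
   difference is (x0 - s_k) - (x1 - t_k) for the approximations s_k, t_k *)
exists (fun k => (ab (phi k)).1 ++ (cd (phi k)).2), (fun k => (cd (phi k)).1 ++ (ab (phi k)).2).
split => [k|k|].
- exists (x0 - ws (ab (phi k)).1 - ws (cd (phi k)).2); last by rewrite word_sum_cat opprD !addrA.
  by apply: Omega_add; [exact: Oa | exact: Omega_Nword].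
- exists (x1 - ws (cd (phi k)).1 - ws (ab (phi k)).2); last by rewrite word_sum_cat opprD !addrA.
  by apply: Omega_add; [exact: Oc | exact: Omega_Nword].
- under eq_cvg => k do rewrite !word_sum_cat subr_translate_swap.
  have -> : (0 : G) = (x0 - x0) - (x1 - x1) by rewrite !subrr.
  by apply: cvgB_zmod; apply: cvgB_zmod => //; exact: cvg_cst.
Qed.

End OmegaTranslate.

Unset Implicit Arguments.
Set Strict Implicit.

Theorem proposition4p11 (G : topologicalZmodType)
  (Hsep : hausdorff_space G) (Hlc : locally_compact [set: G])
  (H2c : @second_countable G)
  (n : nat) (Hn : (2 <= n)%N) (w : 'I_n -> G) (X : set G)
  (HX0 : X !=set0) (HXinv : omega_invariant w X) :
  [/\ (prime_set w X <->
        (forall g0 g1 (U0 U1 : set G), X g0 -> X g1 ->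
           nbhs g0 U0 -> nbhs g1 U1 ->
           exists g mu nu, [/\ X g, U0 (g + word_sum w mu) & U1 (g + word_sum w nu)])),
      (prime_set w X <->
        (forall g0 g1, X g0 -> X g1 ->
           exists (mu nu : nat -> seq 'I_n),
             [/\ (forall k, X (g0 - word_sum w (mu k))),
                 (forall k, X (g1 - word_sum w (nu k))) &
                 (fun k => (g0 - word_sum w (mu k)) - (g1 - word_sum w (nu k)))
                   @ \oo --> (0 : G)])) &
      (prime_set w X <->
        (exists (g : G) (I : {set 'I_n}), I != finset.set0 /\
           X = [set g + x | x in Omega w I]))].
Proof.
have i_ii : prime_set w X -> transitive_set w X := prime_transitive HXinv.
have ii_i : transitive_set w X -> prime_set w X := @transitive_prime _ _ w X.
have iii_ii : backward_asymptotic w X -> transitive_set w X := @asymptotic_transitive _ _ w X.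
have i_iv := prime_Omega_translate HXinv HX0.
have iv_iii := @Omega_translate_asymptotic G n w H2c X.
split; split.
- exact: i_ii.
- exact: ii_i.
- by move=> /i_iv /iv_iii.
- by move=> /iii_ii /ii_i.
- exact: i_iv.
- by move=> /iv_iii /iii_ii /ii_i.
Qed.
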